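(* Let $q$ be a power of an odd prime $p$, let $a,b$ be distinct positive integers and $n$ a positive integer. The $\mathbb{F}_q$-dimension of the radical of the quadratic form $x\mapsto \mathrm{Tr}_{\mathbb{F}_{q^n}/\mathbb{F}_q}(x^{q^b+1}-x^{q^a+1})$ on $\mathbb{F}_{q^n}$ equals $$\begin{cases}(b+a,n)+(|b-a|,n)-(b+a,|b-a|,n) & \text{if } \nu_p(n)\le \max\{\nu_p(b+a),\nu_p(|b-a|)\},\\ (b+a,n)+(|b-a|,n) & \text{if } \nu_p(n)> \max\{\nu_p(b+a),\nu_p(|b-a|)\}.\end{cases}$$
   Context: $(u,v)$ and $(u,v,w)$ denote greatest common divisors; $\nu_p$ is the $p$-adic valuation. The radical of a quadratic form $F$ over $\mathbb{F}_q$ on $\mathbb{F}_{q^n}$ is $\{x\in\mathbb{F}_{q^n}: F(x+y)-F(x)-F(y)=0\ \forall y\in\mathbb{F}_{q^n}\}$. *)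

From HB Require Import structures.
From mathcomp Require Import all_boot all_order all_algebra all_fingroup all_solvable all_field.
Set Implicit Arguments. Unset Strict Implicit. Unset Printing Implicit Defensive.
Import Order.TTheory GRing.Theory Num.Theory.
Local Open Scope ring_scope.

(* Tr_{L/F}, via the library's Galois trace: sum over all F-automorphisms of L
   (1%VS is the copy of F inside L, {:L} the whole of L). *)
Definition trLF (F : fieldType) (L : splittingFieldType F) (x : L) : L :=
  galTrace 1%VS fullv x.

Definition Qform (F : fieldType) (L : splittingFieldType F) (q a b : nat) (x : L) : L :=
  trLF (x ^+ (q ^ b + 1) - x ^+ (q ^ a + 1)).

Definition absdiff (m n : nat) : nat := ((m - n) + (n - m))%N.

(* Let sigma be the Frobenius x |-> x ^+ q, a generator of Gal(L/F). Since the
   trace form Tr(x y) is nondegenerate and sigma^-m is adjoint to sigma^m, the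
   radical is the kernel of x |-> sigma^b x + sigma^-b x - sigma^a x - sigma^-a x,
   which after applying sigma^b is the kernel of (sigma^u - 1)(sigma^v - 1) for
   u = b + a, v = b - a. The kernel of sigma^v - 1 is the fixed field K_v, of
   dimension (v, n), and by additive Hilbert 90 its image is the kernel of the
   relative trace T_v = sum of the elements of <[sigma^v]>. Hence the radical
   has dimension (u, n) + (v, n) - dim T_v(K_u). Now T_v maps K_u into
   K_u /\ K_v = K_(u, v), onto it when p does not divide
   #|<[sigma^u]> :&: <[sigma^v]>| (independence of characters) and to 0
   otherwise; in a cyclic group of order n this divisibility holds exactly when
   nu_p(n) > max(nu_p(u), nu_p(v)). *)

From HB Require Import structures.
From mathcomp Require Import all_boot all_order all_algebra all_fingroup all_solvable all_field.
From mathcomp Require Import zify ring.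
Set Implicit Arguments. Unset Strict Implicit. Unset Printing Implicit Defensive.
Import GRing.Theory.
Local Open Scope ring_scope.

Lemma dim_lker_limg (K : fieldType) (vT : vectType K) (f : 'End(vT)) :
  (\dim (lker f) + \dim (limg f) = \dim {:vT})%N.
Proof. by rewrite -(limg_ker_dim f fullv) capfv. Qed.

Section RelativeTrace.
Variables (F : fieldType) (L : splittingFieldType F).
Implicit Types (U V H : {group gal_of {:L}}) (x y : L).

Definition galTr (H : {set gal_of {:L}}) : 'End(L) :=
  \sum_(h in H) ((h : 'AEnd(L)) : 'End(L)).

Lemma galTrE H y : galTr H y = \sum_(h in H) h y.
Proof. by rewrite sum_lfunE. Qed.

Lemma galTr_fixed H g y : g \in H -> g (galTr H y) = galTr H y.
Proof.
move=> gH; rewrite !galTrE rmorph_sum [RHS](reindex_inj (mulIg g)) /=.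
by apply: eq_big => [h|h _]; rewrite ?groupMr // galM ?memvf.
Qed.

Lemma galTr_eq0 U V y :
  #|U :&: V|%:R = 0 :> L -> y \in fixedField U -> galTr V y = 0.
Proof.
move=> UV0 /mem_fixedFieldP[_ fixU_y].
have sUVV : U :&: V \subset V by apply: subsetIr.
rewrite galTrE -(cover_partition (rcosets_partition sUVV)).
rewrite big_trivIset ?(partition_trivIset (rcosets_partition sUVV)) //.
apply: big1 => _ /rcosetsP[h _ ->].
rewrite (eq_bigr (fun=> h y)) => [|_ /rcosetP[k /setIP[kU _] ->]].
  by rewrite sumr_const card_rcoset -mulr_natl UV0 mul0r.
by rewrite galM ?memvf // fixU_y.
Qed.

(* galTr V \o galTr U = \sum_w #|S w| w, where #|S 1| = #|U :&: V|; conclude by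
   Artin's independence of characters. *)
Lemma galTr_comp_neq0 U V :
  #|U :&: V|%:R != 0 :> L -> exists y, galTr V (galTr U y) != 0.
Proof.
move=> UV_neq0.
pose S w := [set hk : gal_of {:L} * gal_of {:L} |
               [&& hk.1 \in U, hk.2 \in V & hk.1 * hk.2 == w]%g].
have S1 : S 1%g = (fun k => (k, k^-1))%g @: (U :&: V).
  apply/setP => [[h k]]; rewrite inE; apply/idP/imsetP => /=.
    move=> /and3P[hU kV /eqP hk1].
    have kE : k = (h^-1)%g by apply/eqP; rewrite eq_sym eq_invg_mul hk1.
    by exists h; rewrite ?kE // inE hU -groupV -kE.
  by case=> g /setIP[gU gV] [-> ->]; rewrite gU groupV gV mulgV eqxx.
have S1_neq0 : #|S 1%g|%:R != 0 :> L.
  by rewrite S1 card_imset // => k1 k2 [].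
have [y _ sum_neq0] :=
  @gal_independent_contra _ _ {:L} predT (fun w => #|S w|%:R) _ isT S1_neq0.
exists y; rewrite !galTrE.
rewrite (eq_bigr (fun h => \sum_(k in U) (k * h)%g y)); last first.
  by move=> h _; rewrite rmorph_sum; apply: eq_bigr => k _; rewrite galM ?memvf.
rewrite exchange_big pair_big (partition_big (fun hk => (hk.1 * hk.2)%g) predT) //=.
move: sum_neq0; congr (_ != 0); apply: eq_bigr => w _.
rewrite (eq_bigr (fun _ => w y)); last by move=> hk /andP[_ /eqP ->].
rewrite sumr_const mulr_natl; congr (_ *+ _).
by apply: eq_card => hk; rewrite !inE andbA.
Qed.

Lemma trLF_neq0 : exists w : L, trLF w != 0.
Proof.
have [w _ tr_w] := @gal_independent_contra _ _ {:L} (mem 'Gal({:L} / 1)%g)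
  (fun=> 1) _ (group1 _) (oner_neq0 L).
by exists w; rewrite /trLF /galTrace; under eq_bigr do rewrite -[_ _ w]mul1r.
Qed.

Lemma trLF_adjoint g x y : (g \in 'Gal({:L} / 1))%g ->
  trLF (g x * y) = trLF (x * (g^-1)%g y).
Proof.
move=> gGal; rewrite /trLF -(galTrace_gal (x := (g^-1)%g) (memvf _)) ?groupV //.
by rewrite rmorphM /= -galM ?memvf // mulgV gal_id.
Qed.

Lemma Qform_radicalC q a b x :
  (forall y, Qform q b a (x + y) - Qform q b a x - Qform q b a y = 0) <->
  (forall y, Qform q a b (x + y) - Qform q a b x - Qform q a b y = 0).
Proof.
have QformC z : Qform q b a z = - Qform q a b z.
  by rewrite /Qform /trLF -raddfN opprB.
split=> rad_x y; move: (rad_x y); rewrite !QformC => rad_xy.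
all: by rewrite -oppr0 -rad_xy; ring.
Qed.

End RelativeTrace.

Lemma pdvdn_card_cyclicI (gT : finGroupType) (G U V : {group gT}) p :
  prime p -> cyclic G -> U \subset G -> V \subset G ->
  (p %| #|U :&: V|)%N = (p %| #|U|)%N && (p %| #|V|)%N.
Proof.
move=> p_pr cycG sUG sVG; apply/idP/andP => [pUV | [pU pV]].
  by split; apply: dvdn_trans pUV _; apply: cardSg; [apply: subsetIl | apply: subsetIr].
have [x xU ox] := Cauchy p_pr pU; have [y yV oy] := Cauchy p_pr pV.
have sxG : <[x]>%g \subset G by rewrite cycle_subG (subsetP sUG).
have syG : <[y]>%g \subset G by rewrite cycle_subG (subsetP sVG).
have /eqP exy : <[x]>%g == <[y]>%g :> {set gT}.
  by rewrite (eq_subG_cyclic cycG) // -!orderE ox oy.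
by rewrite -ox order_dvdG // inE xU -cycle_subG exy cycle_subG.
Qed.

Section CyclicGalois.
Variables (F : finFieldType) (L : splittingFieldType F) (sigma : gal_of {:L}).
Hypothesis gen_sigma : generator 'Gal({:L} / 1) sigma.
Local Notation n := (\dim {:L}).
Implicit Types (m u v : nat) (x y : L).

Lemma gal1_cycle : 'Gal({:L} / 1)%g = <[sigma]>%g.
Proof. exact/eqP. Qed.

Lemma order_gen : #[sigma]%g = n.
Proof.
rewrite /order -gal1_cycle -galois_dim ?finField_galois ?sub1v //.
by rewrite dimv1 divn1.
Qed.

Lemma galXD m k x : (sigma ^+ (m + k))%g x = (sigma ^+ k)%g ((sigma ^+ m)%g x).
Proof. by rewrite expgD galM ?memvf. Qed.

Lemma galXC m k x :
  (sigma ^+ m)%g ((sigma ^+ k)%g x) = (sigma ^+ k)%g ((sigma ^+ m)%g x).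
Proof. by rewrite -!galXD addnC. Qed.

Definition Kfix m : {vspace L} := fixedField <[sigma ^+ m]>%g.

Lemma KfixP m x : reflect ((sigma ^+ m)%g x = x) (x \in Kfix m).
Proof.
apply: (iffP (fixedFieldP (memvf x))) => [fix_x | fix_x _ /cycleP[k ->]].
  exact/fix_x/cycle_id.
elim: k => [|k IHk]; first by rewrite expg0 gal_id.
by rewrite expgSr galM ?memvf // IHk fix_x.
Qed.

Lemma dim_Kfix m : \dim (Kfix m) = gcdn m n.
Proof.
have := dim_fixedField <[sigma ^+ m]>%G.
rewrite /= -orderE orderXgcd order_gen -/(Kfix m) gcdnC => card_eq.
have n_gt0 : (0 < n)%N by rewrite adim_gt0.
have dvd_Kfix : (\dim (Kfix m) %| n)%N by apply/field_dimS/subvf.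
have dvd_gcd : (gcdn m n %| n)%N by apply: dvdn_gcdr.
apply/eqP; rewrite -(@eqn_pmul2l (n %/ gcdn m n)).
  by rewrite divnK // card_eq divnK.
by rewrite divn_gt0 ?gcdn_gt0 ?n_gt0 ?orbT // dvdn_leq.
Qed.

Lemma Kfix_dvd m k : (m %| k)%N -> (Kfix m <= Kfix k)%VS.
Proof.
case/dvdnP=> j ->; apply/subvP=> x /KfixP fix_x; apply/KfixP.
rewrite mulnC expgM; elim: j => [|j IHj]; first by rewrite expg0 gal_id.
by rewrite expgSr galM ?memvf // IHj fix_x.
Qed.

Lemma Kfix_gcd u v : (0 < u)%N -> (Kfix u :&: Kfix v)%VS = Kfix (gcdn u v).
Proof.
move=> u_gt0; apply/eqP.
rewrite eqEsubv subv_cap !Kfix_dvd ?dvdn_gcdl ?dvdn_gcdr ?andbT //.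
apply/subvP=> x /memv_capP[Ku_x Kv_x]; apply/KfixP.
have fix_mul w i : x \in Kfix w -> (sigma ^+ (i * w))%g x = x.
  by move=> Kw_x; apply/KfixP; apply: (subvP (Kfix_dvd (dvdn_mull i (dvdnn w)))).
have [j _ /dvdnP[k Bezout]] := Bezoutl v u_gt0.
by move: (fix_mul u k Ku_x); rewrite -Bezout galXD galXC fix_mul.
Qed.

Lemma Kfix_order : Kfix n = fullv.
Proof.
apply/vspaceP=> x; rewrite memvf; apply/KfixP.
by rewrite -order_gen expg_order gal_id.
Qed.

Definition diffOp m : 'End(L) := (((sigma ^+ m)%g : 'AEnd(L)) : 'End(L)) - \1%VF.

Lemma diffOpE m x : diffOp m x = (sigma ^+ m)%g x - x.
Proof. by rewrite add_lfunE opp_lfunE id_lfunE. Qed.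

Lemma lker_diffOp m : lker (diffOp m) = Kfix m.
Proof. by apply/vspaceP=> x; rewrite memv_ker diffOpE subr_eq0; apply/eqP/KfixP. Qed.

Lemma galX_galTr m v y :
  (sigma ^+ m)%g (galTr <[sigma ^+ v]>%g y)
  = galTr <[sigma ^+ v]>%g ((sigma ^+ m)%g y).
Proof.
rewrite !galTrE rmorph_sum; apply: eq_bigr => _ /cycleP[j ->].
by rewrite -!expgM galXC.
Qed.

Lemma galTr_Kfix u v y :
  y \in Kfix u -> galTr <[sigma ^+ v]>%g y \in (Kfix u :&: Kfix v)%VS.
Proof.
move=> /KfixP fix_y; rewrite memv_cap; apply/andP; split; apply/KfixP.
  by rewrite galX_galTr fix_y.
by rewrite galTr_fixed ?cycle_id.
Qed.

Lemma limg_galTr_Kfix u v :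
  #|<[sigma ^+ u]>%g :&: <[sigma ^+ v]>%g|%:R != 0 :> L ->
  (galTr <[sigma ^+ v]>%g @: Kfix u)%VS = (Kfix u :&: Kfix v)%VS.
Proof.
move=> UV_neq0; apply/eqP; rewrite eqEsubv.
have -> /= : (galTr <[sigma ^+ v]>%g @: Kfix u <= Kfix u :&: Kfix v)%VS.
  by apply/subvP=> _ /memv_imgP[y Ku_y ->]; apply: galTr_Kfix.
have [y0 t_neq0] := galTr_comp_neq0 UV_neq0.
set x0 := galTr _ y0 in t_neq0; set t := galTr _ x0 in t_neq0.
have Ku_x0 : x0 \in Kfix u by apply/KfixP; rewrite galTr_fixed ?cycle_id.
have /memv_capP[/KfixP fixu_t /mem_fixedFieldP[_ fixv_t]] := galTr_Kfix v Ku_x0.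
apply/subvP=> c /memv_capP[/KfixP fixu_c /mem_fixedFieldP[_ fixv_c]].
apply/memv_imgP; exists (c / t * x0).
  by apply/KfixP; rewrite rmorphM fmorph_div /= fixu_c fixu_t (KfixP _ _ Ku_x0).
rewrite galTrE (eq_bigr (fun h : gal_of {:L} => c / t * h x0)); last first.
  by move=> h Vh; rewrite rmorphM fmorph_div /= fixv_c ?fixv_t.
by rewrite -mulr_sumr -galTrE divfK.
Qed.

Lemma dim_limg_galTr v : \dim (limg (galTr <[sigma ^+ v]>%g)) = gcdn v n.
Proof.
have trivI : #|<[sigma ^+ n]>%g :&: <[sigma ^+ v]>%g|%:R != 0 :> L.
  by rewrite -order_gen expg_order cycle1 (setIidPl (sub1G _)) cards1 oner_neq0.
by have := limg_galTr_Kfix trivI; rewrite Kfix_order capfv => ->; rewrite dim_Kfix.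
Qed.

(* Additive Hilbert 90 for the cyclic group generated by sigma ^+ v. *)
Lemma limg_diffOp v : limg (diffOp v) = lker (galTr <[sigma ^+ v]>%g).
Proof.
apply/eqP; rewrite eqEdim; apply/andP; split.
  apply/subvP=> _ /memv_imgP[y _ ->]; rewrite memv_ker diffOpE raddfB /=.
  by rewrite -galX_galTr galTr_fixed ?cycle_id ?subrr.
have := dim_lker_limg (diffOp v); have := dim_lker_limg (galTr <[sigma ^+ v]>%g).
rewrite lker_diffOp dim_Kfix dim_limg_galTr; lia.
Qed.

(* dim lker (f \o g) = dim lker g + dim (limg g :&: lker f), and
   limg (diffOp v) :&: Kfix u is the kernel of galTr restricted to Kfix u. *)
Lemma dim_lker_diffOp_comp u v :
  (\dim (lker (diffOp u \o diffOp v)%VF) + \dim (galTr <[sigma ^+ v]>%g @: Kfix u)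
   = gcdn u n + gcdn v n)%N.
Proof.
have := dim_lker_limg (diffOp u \o diffOp v)%VF; rewrite limg_comp.
have := limg_ker_dim (diffOp u) (limg (diffOp v)); rewrite lker_diffOp.
have := limg_ker_dim (galTr <[sigma ^+ v]>%g) (Kfix u); rewrite capvC.
have := dim_lker_limg (diffOp v); rewrite lker_diffOp !dim_Kfix !limg_diffOp.
lia.
Qed.

Lemma dim_galTr_Kfix u v : (0 < u)%N ->
  \dim (galTr <[sigma ^+ v]>%g @: Kfix u) =
  if #|<[sigma ^+ u]>%g :&: <[sigma ^+ v]>%g|%:R == 0 :> L then 0%N
  else gcdn (gcdn u v) n.
Proof.
move=> u_gt0; case: ifPn => [/eqP UV0 | UV_neq0].
  apply/eqP; rewrite dimv_eq0 -subv0; apply/subvP=> _ /memv_imgP[y Ku_y ->].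
  by rewrite (galTr_eq0 UV0 Ku_y) memv0.
by rewrite limg_galTr_Kfix // Kfix_gcd // dim_Kfix.
Qed.

Lemma pdvdn_card_cycleX p m : prime p -> (0 < m)%N ->
  (p %| #|<[sigma ^+ m]>%g|)%N = (logn p m < logn p n)%N.
Proof.
move=> p_pr m_gt0; have n_gt0 : (0 < n)%N by rewrite adim_gt0.
have dvd_gcd : (gcdn n m %| n)%N by apply: dvdn_gcdl.
have card_gt0 : (0 < n %/ gcdn n m)%N by rewrite divn_gt0 ?gcdn_gt0 ?n_gt0 // dvdn_leq.
rewrite -orderE orderXgcd order_gen.
have -> : (p %| n %/ gcdn n m)%N = (0 < logn p (n %/ gcdn n m))%N.
  by rewrite logn_gt0 mem_primes p_pr card_gt0.
by rewrite logn_div // logn_gcd //; lia.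
Qed.

Lemma pchar_card_cycleXI p u v : p \in [pchar L] -> (0 < u)%N -> (0 < v)%N ->
  (#|<[sigma ^+ u]>%g :&: <[sigma ^+ v]>%g|%:R == 0 :> L) =
  ~~ (logn p n <= maxn (logn p u) (logn p v))%N.
Proof.
move=> charLp u_gt0 v_gt0; have p_pr := pcharf_prime charLp.
have sXG m : <[sigma ^+ m]>%g \subset <[sigma]>%g by rewrite cycle_subG mem_cycle.
rewrite -(dvdn_pcharf charLp) (pdvdn_card_cyclicI p_pr (cycle_cyclic sigma)) ?sXG //.
by rewrite !pdvdn_card_cycleX // -ltnNge gtn_max.
Qed.

Definition polarMap a b x : L :=
  (sigma ^+ b)%g x + (sigma ^- b)%g x - (sigma ^+ a)%g x - (sigma ^- a)%g x.

Lemma polarMap_diffOp a b x : (a <= b)%N ->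
  (sigma ^+ b)%g (polarMap a b x) = (diffOp (b + a) \o diffOp (b - a))%VF x.
Proof.
move=> le_ab; rewrite comp_lfunE !diffOpE /polarMap !rmorphB rmorphD /=.
rewrite -!galM ?memvf // mulVg gal_id -!expgD.
have -> : ((sigma ^- a) * sigma ^+ b = sigma ^+ (b - a))%g.
  by rewrite -{1}(subnKC le_ab) expgD mulKg.
by rewrite addnCA subnK // (addnC b a); ring.
Qed.

Hypothesis sigmaE : forall x, sigma x = x ^+ #|F|.

Lemma galX_frobenius m x : (sigma ^+ m)%g x = x ^+ (#|F| ^ m).
Proof.
elim: m => [|m IHm]; first by rewrite expg0 gal_id expn0 expr1.
by rewrite expgSr galM ?memvf // sigmaE IHm -exprM expnSr.
Qed.

Lemma Qform_polar a b x y :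
  Qform #|F| a b (x + y) - Qform #|F| a b x - Qform #|F| a b y =
  trLF (polarMap a b x * y).
Proof.
have powE m z : z ^+ (#|F| ^ m + 1) = (sigma ^+ m)%g z * z.
  by rewrite exprD expr1 galX_frobenius.
have trE m : trLF ((sigma ^+ m)%g y * x) = trLF ((sigma ^- m)%g x * y).
  by rewrite trLF_adjoint ?gal1_cycle ?mem_cycle // mulrC.
rewrite /Qform !powE !rmorphD /= -!raddfB /=.
have -> : ((sigma ^+ b)%g x + (sigma ^+ b)%g y) * (x + y)
          - ((sigma ^+ a)%g x + (sigma ^+ a)%g y) * (x + y)
          - ((sigma ^+ b)%g x * x - (sigma ^+ a)%g x * x)
          - ((sigma ^+ b)%g y * y - (sigma ^+ a)%g y * y)
        = ((sigma ^+ b)%g x * y - (sigma ^+ a)%g x * y)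
          + ((sigma ^+ b)%g y * x - (sigma ^+ a)%g y * x) by ring.
rewrite /trLF in trE *; rewrite raddfD /= !raddfB /= !trE.
by rewrite /polarMap !mulrBl !mulrDl !raddfB !raddfD /=; ring.
Qed.

Lemma Qform_radicalP a b x :
  (forall y, Qform #|F| a b (x + y) - Qform #|F| a b x - Qform #|F| a b y = 0)
  <-> polarMap a b x = 0.
Proof.
split=> [rad_x | polar0 y]; last by rewrite Qform_polar polar0 mul0r /trLF raddf0.
apply/eqP/negP => polar_neq0; have [w tr_w] := trLF_neq0 L.
move: (rad_x ((polarMap a b x)^-1 * w)).
rewrite Qform_polar mulrA mulfV ?mul1r; last exact/negP.
by move/eqP; rewrite (negbTE tr_w).
Qed.

Lemma Qform_radical_lt p a b : p \in [pchar L] -> (0 < a)%N -> (a < b)%N ->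
  exists V : {vspace L},
    (forall x : L, x \in V <->
       (forall y : L,
          Qform #|F| a b (x + y) - Qform #|F| a b x - Qform #|F| a b y = 0)) /\
    \dim V =
      (if (logn p n <= maxn (logn p (b + a)) (logn p (absdiff b a)))%N
       then gcdn (b + a) n + gcdn (absdiff b a) n
              - gcdn (gcdn (b + a) (absdiff b a)) n
       else gcdn (b + a) n + gcdn (absdiff b a) n)%N.
Proof.
move=> charLp a_gt0 lt_ab; have le_ab := ltnW lt_ab.
have -> : absdiff b a = (b - a)%N by rewrite /absdiff; lia.
exists (lker (diffOp (b + a) \o diffOp (b - a))%VF); split=> [x|].
  rewrite Qform_radicalP memv_ker -(polarMap_diffOp _ le_ab) fmorph_eq0.
  by split=> /eqP.
have := dim_lker_diffOp_comp (b + a) (b - a).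
have ba_gt0 : (0 < b + a)%N by rewrite addn_gt0 a_gt0 orbT.
rewrite dim_galTr_Kfix // (pchar_card_cycleXI charLp) ?subn_gt0 //.
by case: leqP => _ /=; lia.
Qed.

End CyclicGalois.

Theorem mainTheorem5 (p k q : nat) (F : finFieldType) (L : splittingFieldType F)
    (a b n : nat) :
  prime p -> odd p -> q = (p ^ k)%N -> #|F| = q ->
  (0 < a)%N -> (0 < b)%N -> a != b -> (0 < n)%N ->
  \dim {:L} = n ->
  exists V : {vspace L},
    (forall x : L, x \in V <->
       (forall y : L, Qform q a b (x + y) - Qform q a b x - Qform q a b y = 0)) /\
    \dim V =
      (if (logn p n <= maxn (logn p (b + a)) (logn p (absdiff b a)))%N
       then gcdn (b + a) n + gcdn (absdiff b a) n
              - gcdn (gcdn (b + a) (absdiff b a)) n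
       else gcdn (b + a) n + gcdn (absdiff b a) n)%N.
Proof.
move=> p_pr _ qE cardF a_gt0 b_gt0 neq_ab _ <-; subst q.
have charLp : p \in [pchar L].
  by rewrite (pchar_lalg L); apply: (card_finPcharP (n := k)).
have [sigma gen_sigma sigmaE] := galLgen (L := L) 1%AS.
rewrite dimv1 expn1 in sigmaE; rewrite -cardF.
wlog lt_ab : a b a_gt0 b_gt0 neq_ab / (a < b)%N => [hwlog|].
  case: (ltngtP a b) => [lt_ab | lt_ba | eq_ab]; first exact: hwlog; last first.
    by rewrite eq_ab eqxx in neq_ab.
  have [V [radV dimV]] := hwlog b a b_gt0 a_gt0 (negbT (ltn_eqF lt_ba)) lt_ba.
  exists V; split=> [x|]; first by rewrite radV Qform_radicalC.
  have absdiffC : absdiff a b = absdiff b a by rewrite /absdiff addnC.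
  by rewrite dimV absdiffC (addnC a b).
exact: (Qform_radical_lt gen_sigma sigmaE charLp a_gt0 lt_ab).
Qed.
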